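(* Let $X$ be an uncountable, $\sigma$-compact, separable metric space. Then $C_p(X)$ is not countable dense homogeneous.
   Context: $C_p(X)$ is the space of continuous functions $X\to\mathbb{R}$ with the topology of pointwise convergence. A space $Y$ is countable dense homogeneous if $Y$ is separable and for any two countable dense subsets $D,E\subseteq Y$ there is a homeomorphism $h\colon Y\to Y$ with $h[D]=E$. *)

From HB Require Import structures.
From mathcomp Require Import all_boot all_order all_algebra.
From mathcomp Require Import all_classical all_reals all_analysis.
Set Implicit Arguments. Unset Strict Implicit. Unset Printing Implicit Defensive.
Import Order.TTheory GRing.Theory Num.Theory.
Import numFieldTopology.Exports numFieldNormedType.Exports.
Local Open Scope classical_set_scope.
Local Open Scope ring_scope.

Definition cont_funs (R : realType) (X : topologicalType) : set {ptws X -> R} :=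
  [set f | continuous (f : X -> R)].

(* C_p(X): continuous functions with the (subspace of the) pointwise topology;
   [set_type A] carries the initial topology induced by the inclusion. *)
Definition Cp (R : realType) (X : topologicalType) : topologicalType :=
  set_type (@cont_funs R X).

Definition separable_space (Y : topologicalType) : Prop :=
  exists D : set Y, countable D /\ dense D.

Definition sigma_compact (Y : topologicalType) : Prop :=
  exists K : nat -> set Y, (forall n, compact (K n)) /\ \bigcup_n K n = setT.

Definition homeomorphism (Y : topologicalType) (h : Y -> Y) : Prop :=
  exists g : Y -> Y, [/\ cancel h g, cancel g h, continuous h & continuous g].

Definition CDH (Y : topologicalType) : Prop :=
  separable_space Y /\
  forall D E : set Y, countable D -> dense D -> countable E -> dense E ->
    exists h : Y -> Y, homeomorphism h /\ h @` D = E.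

From HB Require Import structures.
From mathcomp Require Import all_boot all_order all_algebra.
From mathcomp Require Import all_classical all_reals all_analysis.
From mathcomp Require Import borel_hierarchy lra.
Import Order.TTheory GRing.Theory Num.Theory.
Import numFieldTopology.Exports numFieldNormedType.Exports.
Local Open Scope classical_set_scope.
Local Open Scope ring_scope.

(** Let p be a point outside a countable dense set Q of X (X is uncountable)
    and p_k -> p with p_k in Q.  Adding to the members s_j of a countable
    dense subset of C_p(X) the functions c * phi_k, where the bump phi_k peaks
    at p_k, vanishes at p and tends pointwise to 0, gives a countable dense set
    D, in which the heights c grow along an enumeration.  Every f in C_p(X) is
    bounded on {p_k}, as f(p_k) -> f(p), so D meets each closed set
    F_m = {f | |f(p_k)| <= m for all k} in a finite set; points of C_p(X) are
    G_delta (X is separable), hence so is D = \bigcap_m (~F_m \cup (D \cap F_m)).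
    But D \cup {rational constants} is countable, dense and not G_delta, its
    trace on the line of constants being the rationals; and homeomorphisms
    preserve G_delta sets. *)

Definition unpair (n : nat) : nat * nat := odflt (0, 0)%N (unpickle n).

Lemma unpairK : cancel pickle unpair.
Proof. by move=> x; rewrite /unpair pickleK. Qed.

Lemma countableU T (A B : set T) :
  countable A -> countable B -> countable (A `|` B).
Proof.
move=> cA cB.
have -> : A `|` B = \bigcup_(b in [set: bool]) (if b then A else B).
  apply/seteqP; split=> [x [Ax|Bx]|x [[] _ ?]]; by [exists true|exists false|left|right].
by apply: bigcup_countable => // -[].
Qed.

Lemma countable_sub_range {T} (A : set T) (a : T) :
  countable A -> exists g : nat -> T, A `<=` range g.
Proof.
move=> /countable_injP[f finj]; exists ('pinv_(fun=> a) A f) => x Ax.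
by exists (f x); rewrite // pinvKV // inE.
Qed.

Section Gdelta_closure.
Context {T : topologicalType}.
Implicit Types A B : set T.

Lemma Gdelta_setU A B : Gdelta A -> Gdelta B -> Gdelta (A `|` B).
Proof.
move=> [U oU ->] [V oV ->].
exists (fun n => U (unpair n).1 `|` V (unpair n).2) => [n|]; first exact: openU.
apply/seteqP; split=> [x [xU|xV] n _|x xUV]; [left; exact: xU|right; exact: xV|].
have [xU|/existsNP[i /not_implyP[_ nUi]]] := pselect ((\bigcap_i U i) x).
  by left.
right => j _; have := xUV (pickle (i, j)) I.
by rewrite unpairK => -[].
Qed.

Lemma Gdelta_bigcap (A : nat -> set T) :
  (forall m, Gdelta (A m)) -> Gdelta (\bigcap_m A m).
Proof.
move=> GA; have /choice[U UA] : forall m, exists U : (set T)^nat,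
    (forall i, open (U i)) /\ A m = \bigcap_i U i.
  by move=> m; have [U oU eU] := GA m; exists U.
exists (fun n => U (unpair n).1 (unpair n).2) => [n|]; first exact: (UA _).1.
apply/seteqP; split=> [x xA n _|x xU m _].
  by have := xA (unpair n).1 I; rewrite (UA _).2; apply.
rewrite (UA m).2 => i _.
by have := xU (pickle (m, i)) I; rewrite unpairK.
Qed.

Lemma Gdelta_preimage {S : topologicalType} (f : S -> T) A :
  continuous f -> Gdelta A -> Gdelta (f @^-1` A).
Proof.
move=> cf [U oU ->]; exists (fun n => f @^-1` U n).
  by move=> n; exact: (continuousP _).1 cf _ (oU n).
by rewrite preimage_bigcap.
Qed.

Lemma Gdelta_image_II (f : nat -> T) n :
  (forall x : T, Gdelta [set x]) -> Gdelta (f @` `I_n).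
Proof.
move=> Gx; elim: n => [|n IHn]; first by rewrite II0 image_set0; exact/open_Gdelta/open0.
by rewrite IIS image_setU image_set1; exact: Gdelta_setU.
Qed.

End Gdelta_closure.

Lemma Gdelta_set1 {R : archiRealFieldType} {T : pseudoMetricNormedZmodType R}
    (x : T) : hausdorff_space T -> Gdelta [set x].
Proof.
move=> hT; exists (fun n => ball x n.+1%:R^-1) => [n|]; first exact: ball_open.
apply/seteqP; split=> [_ -> n _|y xy]; first exact: ballxx.
apply: close_eq => //; rewrite ball_close => e.
have [n _ /(_ n (leqnn n)) ne] := near_infty_natSinv_lt e.
exact/ball_sym/(le_ball (ltW ne))/(xy n I).
Qed.

Lemma closed_dense_setT {T : topologicalType} (A D : set T) :
  closed A -> dense D -> D `<=` A -> A = setT.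
Proof.
move=> cA dD DA; apply/seteqP; split=> // x _; apply: contrapT => Ax.
have [y [nAy /DA]] : ~` A `&` D !=set0 by apply: dD; [exists x | rewrite openC].
exact: nAy.
Qed.

Lemma denseS {T : topologicalType} {A B : set T} : A `<=` B -> dense A -> dense B.
Proof.
move=> AB dA O O0 oO; have [x [Ox Ax]] := dA O O0 oO; by exists x; split; [|exact: AB].
Qed.

Lemma CDH_Gdelta (Y : topologicalType) (D E : set Y) : CDH Y ->
  countable D -> dense D -> Gdelta D -> countable E -> dense E -> Gdelta E.
Proof.
move=> [_ cdh] cD dD GD cE dE.
have [h [[g [hK gK _ cg]] <-]] := cdh D E cD dD cE dE.
have -> : h @` D = g @^-1` D.
  by apply/seteqP; split=> [_ [x Dx <-]|y Dgy]; [rewrite /= hK|exists (g y); rewrite ?gK].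
exact: Gdelta_preimage.
Qed.

Section pointwise_topology.
Context {R : realType} {X : topologicalType}.
Local Notation Cp := (@Cp R X).
Implicit Types f g : Cp.

Lemma Cp_continuous f : continuous (sval f : X -> R).
Proof. exact: set_mem (svalP f). Qed.

Lemma Cp_inj f g : (sval f : X -> R) = sval g -> f = g.
Proof. by move=> fg; apply: eq_sig_hprop => // h u v; exact: Prop_irrelevance. Qed.

Lemma eval_continuous (x : X) : continuous (fun f : Cp => (sval f : X -> R) x).
Proof.
move=> f; apply: (@continuous_comp Cp {ptws X -> R} R sval (fun h => h x)).
  exact: initial_continuous.
exact: proj_continuous.
Qed.

Lemma Cp_cvg {T : Type} (F : set_system T) {FF : Filter F} (u : T -> Cp) f :
  (forall x, (fun t => (sval (u t) : X -> R) x) @ F --> (sval f : X -> R) x) ->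
  u @ F --> f.
Proof.
move=> ux A.
have uf : (fun t => sval (u t) : {ptws X -> R}) @ F --> (sval f : {ptws X -> R}).
  exact/pointwise_cvgP.
rewrite nbhsE => -[_ [[W oW <-] Wf] WA].
by apply: filterS WA _; apply: uf; exact: open_nbhs_nbhs.
Qed.

Definition cst_Cp (r : R) : Cp :=
  exist _ (cst r : {ptws X -> R})
    (@mem_set _ (@cont_funs R X) _ (@cst_continuous X R r)).

Lemma cst_Cp_continuous : continuous cst_Cp.
Proof.
apply: continuous_comp_initial => r; apply/pointwise_cvgP => x.
exact: cvg_id.
Qed.

Lemma Cp_eq_on_dense (D : set X) f g :
  dense D -> {in D, (sval f : X -> R) =1 sval g} -> f = g.
Proof.
move=> dD fg; apply/Cp_inj/funext => x.
pose E := [set y | (sval f : X -> R) y = sval g y]; change (E x).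
suff -> : E = setT by [].
apply: closed_dense_setT dD _ => [|y /mem_set/fg //].
have -> : E = (fun y => (sval f : X -> R) y - sval g y) @^-1` [set 0].
  by apply/seteqP; split=> y /= => [->|/eqP]; rewrite ?subrr // subr_eq0 => /eqP.
apply: preimage_closed => [y _|]; first by apply: cvgB; exact: Cp_continuous.
exact/accessible_closed_set1/hausdorff_accessible/Rhausdorff.
Qed.

Lemma Gdelta_Cp_set1 (q : nat -> X) f : dense (range q) -> Gdelta [set f].
Proof.
move=> dq.
have -> : [set f] = \bigcap_n ((fun g : Cp => (sval g : X -> R) (q n)) @^-1`
    [set (sval f : X -> R) (q n)]).
  apply/seteqP; split=> [_ -> //|g gf]; apply: Cp_eq_on_dense dq _.
  by move=> _ /set_mem[n _ <-]; rewrite (gf n).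
apply: Gdelta_bigcap => n; apply: Gdelta_preimage; first exact: eval_continuous.
exact/Gdelta_set1/Rhausdorff.
Qed.

Lemma not_Gdelta_setU_cst_rational (x0 : X) (D : set Cp) :
  (forall r, ~ D (cst_Cp r)) -> ~ Gdelta (D `|` cst_Cp @` rational).
Proof.
move=> Dncst GE; apply: (@not_rational_Gdelta R).
have -> : rational = cst_Cp @^-1` (D `|` cst_Cp @` rational).
  apply/seteqP; split=> [r Qr|r [/Dncst //|[s Qs]]]; first by right; exists r.
  by move=> /(congr1 (fun g => sval g x0)) /= <-.
exact: Gdelta_preimage cst_Cp_continuous GE.
Qed.

End pointwise_topology.

Section bumps.
Context {R : realType} {X : metricType R}.
Local Notation dist := (@mdist R X).

Lemma mdist_continuous (a : X) : continuous (dist a).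
Proof.
move=> x; apply/cvgrPdist_lt => e e0; apply/nbhs_ballP; exists e => //= y.
rewrite ballEmdist /= => xy; have := metric_triangle a x y.
have := metric_triangle a y x; rewrite (metric_sym y x) ltr_norml; lra.
Qed.

Lemma dense_cvg_seq (Q : set X) (x : X) :
  dense Q -> exists2 u : nat -> X, (forall n, Q (u n)) & u @ \oo --> x.
Proof.
move=> dQ; have /choice[u uQ] : forall n : nat, exists y, Q y /\ dist x y < n.+1%:R^-1.
  move=> n; pose B := dist x @^-1` [set r | r < n.+1%:R^-1].
  have B0 : B !=set0 by exists x; rewrite /B /= mdistxx invr_gt0.
  have oB : open B.
    by apply: open_comp => [y _|]; [exact: mdist_continuous|exact: open_lt].
  by have [y [xy Qy]] := dQ B B0 oB; exists y.
exists u => [n|]; first exact: (uQ n).1.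
apply/metricType_numDomainType.cvgrPdist_lt => e e0.
near=> n; apply: lt_trans (uQ n).2 _; near: n.
exact: near_infty_natSinv_lt (PosNum e0).
Unshelve. all: by end_near. Qed.

Variables (p : X) (pp : nat -> X).
Hypothesis pp_neq : forall i, pp i != p.
Hypothesis pp_cvg : pp @ \oo --> p.

Let radius i := dist p (pp i) / 2.

Let radius_gt0 i : 0 < radius i.
Proof. by rewrite divr_gt0 // mdist_gt0 eq_sym pp_neq. Qed.

Definition bump i x := Num.max 0 (1 - dist (pp i) x / radius i).

Lemma bump_continuous i : continuous (bump i).
Proof.
move=> x; apply: (@continuous_max _ _ (cst 0) (fun y => 1 - dist (pp i) y / radius i)).
  exact: cvg_cst.
by apply: cvgB; [exact: cvg_cst|apply: cvgM; [exact: mdist_continuous|exact: cvg_cst]].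
Qed.

Lemma bump_center i : bump i (pp i) = 1.
Proof. by rewrite /bump mdistxx mul0r subr0 /Num.max ltr01. Qed.

Lemma bump_eq0 i x : radius i <= dist (pp i) x -> bump i x = 0.
Proof.
move=> rx; rewrite /bump /Num.max ifF //; apply/negbTE; rewrite -leNgt.
by rewrite subr_le0 ler_pdivlMr // mul1r.
Qed.

Lemma bump_base i : bump i p = 0.
Proof.
apply: bump_eq0; rewrite metric_sym /radius ler_pdivrMr // ler_pMr ?ler1n //.
by rewrite mdist_gt0 eq_sym pp_neq.
Qed.

Lemma bump_eventually0 x : \forall i \near \oo, bump i x = 0.
Proof.
have [->|xp] := eqVneq x p; first exact: nearW bump_base.
have px0 : 0 < dist p x / 2 by rewrite divr_gt0 // mdist_gt0 eq_sym.
near=> i; apply: bump_eq0.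
have : dist p (pp i) < dist p x / 2.
  by near: i; exact: metricType_numDomainType.cvgr_dist_lt pp_cvg _ px0.
have := metric_triangle p (pp i) x; rewrite /radius; lra.
Unshelve. all: by end_near. Qed.

End bumps.

Section spikes.
Context {R : realType} {X : metricType R}.
Local Notation Cp := (@Cp R X).
Variables (p : X) (pp : nat -> X).
Hypothesis pp_neq : forall i, pp i != p.
Hypothesis pp_cvg : pp @ \oo --> p.
Variable s : nat -> Cp.

Let base n : X -> R := sval (s (unpair n).1).
Let peak n := pp (unpair n).2.

(* The two norms absorb the base function in [spike_jump]. *)
Definition spike_height n := n.+1%:R + `|base n (peak n)| + `|base n p|.

Let spike_fun n x := base n x + spike_height n * bump p pp (unpair n).2 x.

Let spike_fun_continuous n : continuous (spike_fun n).
Proof.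
move=> x; apply: cvgD; first exact: Cp_continuous.
by apply: cvgM; [exact: cvg_cst|exact: bump_continuous].
Qed.

Definition spike n : Cp :=
  exist _ (spike_fun n : {ptws X -> R})
    (@mem_set _ (@cont_funs R X) _ (spike_fun_continuous n)).

Lemma spike_jump n :
  n.+1%:R <= `|sval (spike n) (peak n)| /\
  n.+1%:R <= sval (spike n) (peak n) - sval (spike n) p.
Proof.
rewrite /= /spike_fun bump_center (bump_base _ _ pp_neq) mulr1 mulr0 addr0 /spike_height.
set a := base n (peak n); set b := base n p.
have := normr_ge0 b; have := ler_norm (- a); have := ler_norm b; rewrite normrN.
have := ler_norm (a + (n.+1%:R + `|a| + `|b|)); split; lra.
Qed.

Lemma cst_notin_range_spike r : ~ range spike (cst_Cp r).
Proof.
move=> [n _ snr]; have [_] := spike_jump n; rewrite snr /= subrr.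
by apply/negP; rewrite -ltNge ltr0Sn.
Qed.

Definition bounded_on_pp (m : nat) : set Cp :=
  [set f | forall i, `|(sval f : X -> R) (pp i)| <= m%:R].

Lemma closed_bounded_on_pp m : closed (bounded_on_pp m).
Proof.
have -> : bounded_on_pp m =
    \bigcap_i ((fun f : Cp => `|(sval f : X -> R) (pp i)|) @^-1` [set r | r <= m%:R]).
  by apply/seteqP; split=> f fm i => [_|]; exact: fm.
apply: closed_bigI => i _; apply: preimage_closed; last exact: closed_le.
by move=> f _; apply: (continuous_comp (eval_continuous _ f)); exact: norm_continuous.
Qed.

Lemma bigcup_bounded_on_pp : \bigcup_m bounded_on_pp m = setT.
Proof.
apply/seteqP; split=> // f _.
have : cvgn (fun i => (sval f : X -> R) (pp i)).
  by apply/cvg_ex; exists (sval f p); apply: continuous_cvg pp_cvg; exact: Cp_continuous.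
move=> /cvg_seq_bounded/(ex_bound _ (PF := globally_properfilter (a := 0%N) I))[M /= fM].
exists (Num.Def.archi_bound `|M|) => // i; apply: le_trans (fM i I) _.
exact/ltW/(le_lt_trans (ler_norm M))/archi_boundP.
Qed.

Lemma spike_not_bounded m n : (m < n)%N -> ~ bounded_on_pp m (spike n).
Proof.
move=> mn /(_ (unpair n).2); have [+ _] := spike_jump n.
have : m%:R < n.+1%:R :> R by rewrite ltr_nat ltnS ltnW.
rewrite /peak; lra.
Qed.

Lemma Gdelta_range_spike : (forall f : Cp, Gdelta [set f]) -> Gdelta (range spike).
Proof.
move=> G1; have -> : range spike =
    \bigcap_m (~` bounded_on_pp m `|` spike @` `I_m.+1).
  apply/seteqP; split=> [_ [n _ <-] m _|f fD].
    by have [nm|/spike_not_bounded] := leqP n m; [right; exists n|left].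
  have : (\bigcup_m bounded_on_pp m) f by rewrite bigcup_bounded_on_pp.
  by case=> m _ fm; case: (fD m I) => // -[n _ <-]; exists n.
apply: Gdelta_bigcap => m; apply: Gdelta_setU; last exact: Gdelta_image_II.
by apply: open_Gdelta; rewrite openC; exact: closed_bounded_on_pp.
Qed.

Lemma spike_cvg j : (fun k => spike (pickle (j, k))) @ \oo --> s j.
Proof.
apply: Cp_cvg => x; apply: cvg_near_cst.
near=> k; rewrite /= /spike_fun /base unpairK /=.
by rewrite (near (bump_eventually0 _ _ pp_neq pp_cvg x) k) // mulr0 addr0.
Unshelve. all: by end_near. Qed.

Lemma dense_range_spike : dense (range s) -> dense (range spike).
Proof.
move=> ds O O0 oO; have [f [Of [j _ jf]]] := ds O O0 oO; subst f.
have [k Ok] : exists k : nat, O (spike (pickle (j, k))).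
  by apply: (@filter_ex _ \oo); apply: spike_cvg; exact: open_nbhs_nbhs.
by exists (spike (pickle (j, k))).
Qed.

End spikes.

Theorem mainTheorem3 (R : realType) (X : metricType R) :
  ~ countable [set: X] -> sigma_compact X -> separable_space X ->
  ~ CDH (@Cp R X).
Proof.
move=> Xunc _ [Q [Qc dQ]] cdh.
have [p Qp] : exists p, ~ Q p.
  apply/existsNP => allQ; apply/Xunc/(sub_countable _ Qc).
  by apply: subset_card_le => x _; exact: allQ.
have [pp ppQ pp_cvg] := dense_cvg_seq _ p dQ.
have pp_neq i : pp i != p by apply: contra_notN Qp => /eqP <-; exact: ppQ.
have [q Qq] := countable_sub_range _ p Qc.
have [[S [Sc dS]] _] := cdh.
have [s Ss] := countable_sub_range _ (cst_Cp 0) Sc.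
set D := range (spike p pp s).
have GD : Gdelta D.
  apply: (Gdelta_range_spike _ _ pp_neq pp_cvg) => f.
  exact: Gdelta_Cp_set1 _ f (denseS Qq dQ).
have dD : dense D := dense_range_spike _ _ pp_neq pp_cvg _ (denseS Ss dS).
have cE : countable (D `|` cst_Cp @` rational).
  apply: countableU; first exact: card_image_le.
  apply: card_le_trans (card_image_le _ _) _.
  exact: card_le_trans (card_image_le _ _) (countableP _).
apply: (not_Gdelta_setU_cst_rational p _ (cst_notin_range_spike _ _ pp_neq s)).
exact: CDH_Gdelta cdh (card_image_le _ _) dD GD cE (denseS (@subsetUl _ _ _) dD).
Qed.
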